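(* Let $\mathcal{G}\subset\mathcal{S}$ be closed under convolution (i.e. $f*F\in\mathcal{G}$ whenever $f,F\in\mathcal{G}$), and let $\mathcal{G}_H^0$ be its harmonic analogue. Then: (i) for every $f\in\mathcal{G}_H^0$, $f*f\in\mathcal{G}_H^0$; (ii) if $(f+F)/2\in\mathcal{G}$ for all $f,F\in\mathcal{G}$, then $\mathcal{G}_H^0$ is closed under convolution, i.e. $f_1*f_2\in\mathcal{G}_H^0$ for all $f_1,f_2\in\mathcal{G}_H^0$.
   Context: $\mathbb{D}$ is the open unit disk. $\mathcal{S}$ is the class of analytic univalent functions $f$ in $\mathbb{D}$ with $f(0)=0$, $f'(0)=1$. For $\mathcal{G}\subset\mathcal{S}$, its harmonic analogue $\mathcal{G}_H^0$ is the class of harmonic functions $f=h+\bar g$ ($h,g$ analytic in $\mathbb{D}$) such that $h+\epsilon g\in\mathcal{G}$ for every $\epsilon\in\mathbb{C}$ with $|\epsilon|=1$. For analytic $f(z)=\sum a_nz^n$, $F(z)=\sum A_nz^n$, the convolution (Hadamard product) is $(f*F)(z)=\sum a_nA_nz^n$. For harmonic $f=h+\bar g$, $F=H+\bar G$, the harmonic convolution is $f*F=h*H+\overline{g*G}$. *)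

From Stdlib Require Import Reals.
From Coquelicot Require Import Coquelicot.
Open Scope C_scope.

(* An analytic function in the unit disk D is represented by its Taylor
   coefficients a : nat -> C, f(z) = sum_n a n z^n, the series converging
   for every |z| < 1 (i.e. radius of convergence >= 1). *)
Definition coeffs := nat -> C.

Definition in_disk (z : C) : Prop := (Cmod z < 1)%R.

Definition has_value (a : coeffs) (z v : C) : Prop :=
  is_series (fun n => a n * Cpow z n) v.

Definition analytic_disk (a : coeffs) : Prop :=
  forall z, in_disk z -> ex_series (fun n => a n * Cpow z n).

Definition univalent_disk (a : coeffs) : Prop :=
  forall z1 z2 v, in_disk z1 -> in_disk z2 ->
    has_value a z1 v -> has_value a z2 v -> z1 = z2.

(* The class S: analytic univalent in D with f(0)=0 (a_0 = 0), f'(0)=1 (a_1 = 1). *)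
Definition classS (a : coeffs) : Prop :=
  analytic_disk a /\ univalent_disk a /\ a 0%nat = 0 /\ a 1%nat = 1.

Definition conv (a b : coeffs) : coeffs := fun n => a n * b n.

(* A harmonic function f = h + conj g is represented by the pair (h, g). *)
Definition harm := (coeffs * coeffs)%type.

Definition hconv (f F : harm) : harm :=
  (conv (fst f) (fst F), conv (snd f) (snd F)).

Definition harmonic_analogue (G : coeffs -> Prop) (f : harm) : Prop :=
  analytic_disk (fst f) /\ analytic_disk (snd f) /\
  forall eps : C, Cmod eps = 1%R ->
    G (fun n => fst f n + eps * snd f n).

(* Membership of f = h + conj g in G_H^0 only depends on the analytic functions
   h + eps g, |eps| = 1, and convolutions of such functions are again of this
   shape: (h + s g) * (h - s g) = h * h + eps (g * g) when s^2 = -eps, and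
   ((h1 + eps g1) * (h2 + g2) + (h1 - eps g1) * (h2 - g2)) / 2
   = h1 * h2 + eps (g1 * g2).  Analyticity of h and g is recovered from
   eps = 1 and eps = -1, since h and g are the half sum and half difference of
   h + g and h - g. *)

From Stdlib Require Import Reals Lra Psatz FunctionalExtensionality.
From Coquelicot Require Import Coquelicot.
Open Scope C_scope.

Lemma analytic_disk_ext (a b : coeffs) :
  (forall n, a n = b n) -> analytic_disk a -> analytic_disk b.
Proof.
  intros Eab Ha z Hz.
  eapply (@ex_series_ext C_AbsRing C_NormedModule); [|exact (Ha z Hz)].
  intros n; simpl; now rewrite Eab.
Qed.

Lemma analytic_disk_lin_comb (a b : coeffs) (c d : C) :
  analytic_disk a -> analytic_disk b ->
  analytic_disk (fun n => c * a n + d * b n).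
Proof.
  intros Ha Hb z Hz.
  pose proof (@ex_series_scal_l C_AbsRing C_NormedModule c _ (Ha z Hz)) as Hca.
  pose proof (@ex_series_scal_l C_AbsRing C_NormedModule d _ (Hb z Hz)) as Hdb.
  eapply (@ex_series_ext C_AbsRing C_NormedModule);
    [|exact (@ex_series_plus C_AbsRing C_NormedModule _ _ Hca Hdb)].
  intros n; simpl.
  change (c * (a n * Cpow z n) + d * (b n * Cpow z n)
          = (c * a n + d * b n) * Cpow z n).
  ring.
Qed.

Lemma Cmod_eq1_sqrt (w : C) :
  Cmod w = 1%R -> exists s : C, Cmod s = 1%R /\ s * s = w.
Proof.
  destruct w as [u v]; intros Hw.
  assert (Huv : (u * u + v * v = 1)%R).
  { pose proof (Cmod2_alt (u, v)) as E; rewrite Hw in E; simpl in E; nra. }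
  set (x := sqrt ((1 + u) / 2)); set (y := sqrt ((1 - u) / 2)).
  assert (Hx : (x * x = (1 + u) / 2)%R) by (apply sqrt_sqrt; nra).
  assert (Hy : (y * y = (1 - u) / 2)%R) by (apply sqrt_sqrt; nra).
  (* (2xy)^2 = 1 - u^2 = v^2, so 2xy = v up to the sign of y. *)
  assert (Hxy : (2 * x * y = v \/ 2 * x * (- y) = v)%R).
  { assert (E : ((2 * x * y - v) * (2 * x * y + v) = 0)%R) by nra.
    destruct (Rmult_integral _ _ E); [left | right]; lra. }
  assert (Hmod : forall y', (y' * y' = y * y)%R -> Cmod (x, y') = 1%R).
  { intros y' Hy'; unfold Cmod; simpl.
    replace (x * (x * 1) + y' * (y' * 1))%R with 1%R by nra.
    apply sqrt_1. }
  destruct Hxy as [Hv | Hv].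
  - exists (x, y); split; [apply Hmod; reflexivity|].
    unfold Cmult; simpl; f_equal; nra.
  - exists (x, - y)%R; split; [apply Hmod; ring|].
    unfold Cmult; simpl; f_equal; nra.
Qed.

Section HarmonicAnalogue.

Variable G : coeffs -> Prop.
Hypothesis G_classS : forall a, G a -> classS a.

Lemma harmonic_analogueI (h g : coeffs) :
  (forall eps : C, Cmod eps = 1%R -> G (fun n => h n + eps * g n)) ->
  harmonic_analogue G (h, g).
Proof.
  intros HG.
  destruct (G_classS _ (HG 1 Cmod_1)) as [Hplus _].
  destruct (G_classS _ (HG (- (1)) Cmod_m1)) as [Hminus _].
  split; [|split]; [| |exact HG].
  - apply (analytic_disk_ext
             (fun n => / 2 * (h n + 1 * g n) + / 2 * (h n + - (1) * g n))).
    + intros n; simpl; field.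
    + now apply analytic_disk_lin_comb.
  - apply (analytic_disk_ext
             (fun n => / 2 * (h n + 1 * g n) + - / 2 * (h n + - (1) * g n))).
    + intros n; simpl; field.
    + now apply analytic_disk_lin_comb.
Qed.

Hypothesis G_conv : forall a b, G a -> G b -> G (conv a b).

Lemma harmonic_analogue_hconv_self (f : harm) :
  harmonic_analogue G f -> harmonic_analogue G (hconv f f).
Proof.
  destruct f as [h g]; intros [_ [_ Hf]]; simpl in Hf.
  apply harmonic_analogueI; intros eps Heps.
  destruct (Cmod_eq1_sqrt (- eps)) as [s [Hs Hss]]; [now rewrite Cmod_opp|].
  assert (Hs' : Cmod (- s) = 1%R) by now rewrite Cmod_opp.
  replace (fun n => _) with (conv (fun n => h n + s * g n) (fun n => h n + - s * g n)).
  - exact (G_conv _ _ (Hf s Hs) (Hf (- s) Hs')).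
  - apply functional_extensionality; intros n; unfold conv; simpl.
    replace eps with (- (s * s)) by (rewrite Hss; ring); ring.
Qed.

Hypothesis G_midpoint : forall a b, G a -> G b -> G (fun n => (a n + b n) / 2).

Lemma harmonic_analogue_hconv (f1 f2 : harm) :
  harmonic_analogue G f1 -> harmonic_analogue G f2 ->
  harmonic_analogue G (hconv f1 f2).
Proof.
  destruct f1 as [h1 g1], f2 as [h2 g2]; intros [_ [_ Hf1]] [_ [_ Hf2]].
  simpl in Hf1, Hf2.
  apply harmonic_analogueI; intros eps Heps.
  assert (Heps' : Cmod (- eps) = 1%R) by now rewrite Cmod_opp.
  replace (fun n => _) with
    (fun n => (conv (fun n => h1 n + eps * g1 n) (fun n => h2 n + 1 * g2 n) n
             + conv (fun n => h1 n + - eps * g1 n) (fun n => h2 n + - (1) * g2 n) n)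
             / 2).
  - apply G_midpoint; apply G_conv; auto using Cmod_1, Cmod_m1.
  - apply functional_extensionality; intros n; unfold conv; simpl; field.
Qed.

End HarmonicAnalogue.

Theorem theorem2p9 (G : coeffs -> Prop)
  (HGS : forall a, G a -> classS a)
  (HGconv : forall a b, G a -> G b -> G (conv a b)) :
  (forall f : harm, harmonic_analogue G f -> harmonic_analogue G (hconv f f)) /\
  ((forall a b, G a -> G b -> G (fun n => (a n + b n) / 2)) ->
   forall f1 f2 : harm, harmonic_analogue G f1 -> harmonic_analogue G f2 ->
     harmonic_analogue G (hconv f1 f2)).
Proof.
  split.
  - exact (harmonic_analogue_hconv_self G HGS HGconv).
  - intros Hmid; exact (harmonic_analogue_hconv G HGS HGconv Hmid).
Qed.
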